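(* Let $X$ be a real Banach space. Then $X$ has the SD2P if and only if for every $n\in\mathbb{N}$, $x_1,\dots,x_n\in B_X$ and $\varepsilon>0$ there exist $m\in\mathbb{N}$, elements $y_{ij}\in B_X$ ($1\le i\le n$, $1\le j\le m$) and $\alpha_1,\dots,\alpha_m>0$ with $\sum_{j=1}^m\alpha_j=1$ such that $\big\|x_i-\sum_{j=1}^m\alpha_jy_{ij}\big\|<\varepsilon$ for every $i=1,\dots,n$ and $\big\|\sum_{i=1}^n\frac1n y_{ij}\big\|>1-\varepsilon$ for every $j=1,\dots,m$.
   Context: $X$ has the strong diameter two property (SD2P) if every convex combination of slices of $B_X$ has diameter 2, where a slice is $\{x\in B_X: f(x)>1-\alpha\}$ with $f\in S_{X^*}$, $\alpha>0$. *)

From HB Require Import structures.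
From mathcomp Require Import all_boot all_order all_algebra.
From mathcomp Require Import all_classical all_reals all_analysis.
Set Implicit Arguments. Unset Strict Implicit. Unset Printing Implicit Defensive.
Import Order.TTheory GRing.Theory Num.Theory.
Import numFieldNormedType.Exports.
Local Open Scope ring_scope.
Local Open Scope classical_set_scope.

Section SD2P.
Variables (R : realType) (X : normedModType R).

Definition ballX : set X := [set x | `|x| <= 1].

(* f is a norm-one (hence continuous) linear functional: f \in S_{X^*}.
   ||f|| = sup_{x in B_X} |f x| = 1 is written out. *)
Definition unit_dual (f : X -> R) : Prop :=
  [/\ (forall x y, f (x + y) = f x + f y),
      (forall (a : R) x, f (a *: x) = a * f x),
      (forall x, `|f x| <= `|x|) &
      (forall e : R, 0 < e -> exists2 x, `|x| <= 1 & f x > 1 - e)].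

Definition slice (f : X -> R) (alpha : R) : set X :=
  [set x | `|x| <= 1 /\ f x > 1 - alpha].

Definition convex_comb_sets (n : nat) (lam : 'I_n -> R) (S : 'I_n -> set X)
  : set X :=
  [set z | exists x : 'I_n -> X, (forall i, S i (x i)) /\ z = \sum_(i < n) lam i *: x i].

Definition diam_eq2 (C : set X) : Prop :=
  (forall u v, C u -> C v -> `|u - v| <= 2) /\
  (forall e : R, 0 < e -> exists u v, [/\ C u, C v & `|u - v| > 2 - e]).

Definition SD2P : Prop :=
  forall (n : nat) (lam : 'I_n -> R) (f : 'I_n -> X -> R) (alpha : 'I_n -> R),
    (forall i, 0 < lam i) -> \sum_(i < n) lam i = 1 ->
    (forall i, unit_dual (f i)) -> (forall i, 0 < alpha i) ->
    diam_eq2 (convex_comb_sets lam (fun i => slice (f i) (alpha i))).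

End SD2P.

From HB Require Import structures.
From mathcomp Require Import all_boot all_order all_algebra.
From mathcomp Require Import all_classical all_reals all_analysis.
From mathcomp Require Import ring lra.
Set Implicit Arguments.
Unset Strict Implicit.
Unset Printing Implicit Defensive.
Import Order.TTheory GRing.Theory Num.Theory.
Import numFieldNormedType.Exports.
Local Open Scope ring_scope.
Local Open Scope classical_set_scope.

(* (->) If some x in B_X^n stayed eps-far, in some coordinate, from every convex
   combination of "admissible" n-tuples d in B_X^n, those with
   || (d_1 + ... + d_n) / n || > 1 - eps, then for any admissible d0 the tuple x - d0
   would lie at l1-distance >= eps from the cone spanned by the points d + b - x
   (d admissible, b small).  Hahn-Banach then gives functionals g_1, ..., g_n on X, not all zero, with
   sum_i g_i (d_i) + g_k (b) <= sum_i g_i (x_i) for all such d and b.  Slicing B_X along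
   the normalised g_i, the SD2P produces an admissible d with g_i (d_i) almost ||g_i||
   for every i, and a suitable b makes the left-hand side too large.
   (<-) Approximate the weights of a convex combination of slices by k_i / K, and apply
   the condition to the points z_i and - z_i, each repeated k_i times, where z_i lies
   deep in the i-th slice.  By averaging, some column y_j of the approximating family
   lies in the slices, and the means of its two halves (signs corrected) are points of
   the convex combination of slices at distance almost 2. *)

Section InfBounds.
Variable R : realType.
Implicit Types (A B : set R) (a c t : R).

Lemma inf_le_mem A c a : lbound A c -> A a -> inf A <= a.
Proof. by move=> Ac; apply: ge_inf; exists c. Qed.

Lemma lb_le_inf_add A B c : A !=set0 -> B !=set0 ->
  (forall a b, A a -> B b -> c <= a + b) -> c <= inf A + inf B.
Proof.
move=> A0 B0 cAB; rewrite -lerBlDl; apply: lb_le_inf => // b Bb.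
rewrite lerBlDl -lerBlDr; apply: lb_le_inf => // a Aa.
by rewrite lerBlDr cAB.
Qed.

Lemma lb_le_inf_scale A c t : A !=set0 -> 0 < t ->
  (forall a, A a -> c <= t * a) -> c <= t * inf A.
Proof.
move=> A0 t0 cA; rewrite -ler_pdivrMl //; apply: lb_le_inf => // a Aa.
by rewrite ler_pdivrMl // cA.
Qed.

End InfBounds.

Section Sublinear.
Variables (R : realType) (V : lmodType R).
Implicit Types (p q : V -> R) (x y : V).

Definition sublinear q :=
  (forall x y, q (x + y) <= q x + q y) /\
  (forall (t : R) x, 0 <= t -> q (t *: x) <= t * q x).

Definition linear_form (g : V -> R) :=
  (forall x y, g (x + y) = g x + g y) /\ (forall (a : R) x, g (a *: x) = a * g x).

Lemma linear_form0 g : linear_form g -> g 0 = 0.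
Proof. by case=> _ gZ; rewrite -(scale0r 0) gZ mul0r. Qed.

Lemma linear_formN g x : linear_form g -> g (- x) = - g x.
Proof. by case=> _ gZ; rewrite -scaleN1r gZ mulN1r. Qed.

Lemma linear_form_sum g (I : Type) (r : seq I) (P : pred I) (F : I -> V) :
  linear_form g -> g (\sum_(i <- r | P i) F i) = \sum_(i <- r | P i) g (F i).
Proof. by move=> hg; apply: (big_morph g hg.1 (linear_form0 hg)). Qed.

Lemma sublinear0 q : sublinear q -> q 0 = 0.
Proof.
case=> qD qZ; apply/eqP; rewrite eq_le; apply/andP; split.
  by have := qZ 0 0 (lexx _); rewrite scale0r mul0r.
by have := qD 0 0; rewrite addr0 -lerBlDl subrr.
Qed.

Lemma sublinear_oppr_le q x : sublinear q -> - q (- x) <= q x.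
Proof. by move=> hq; rewrite -subr_ge0 opprK -(sublinear0 hq) -(subrr x); apply: hq.1. Qed.

Lemma sublinearZ q (t : R) x : sublinear q -> 0 <= t -> q (t *: x) = t * q x.
Proof.
move=> hq; rewrite le_eqVlt => /predU1P[<-|t0]; first by rewrite scale0r mul0r sublinear0.
apply/le_anti/andP; split; first exact: hq.2 _ _ (ltW t0).
rewrite -ler_pdivlMl //; have := hq.2 t^-1 (t *: x); rewrite invr_ge0 (ltW t0).
by rewrite scalerA mulVf ?gt_eqF // scale1r; apply.
Qed.

Lemma sublinear_sum q (I : Type) (r : seq I) (P : pred I) (t : I -> R) (v : I -> V) :
  sublinear q -> (forall i, 0 <= t i) ->
  q (\sum_(i <- r | P i) t i *: v i) <= \sum_(i <- r | P i) t i * q (v i).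
Proof.
move=> hq t0; elim/big_rec2: _ => [|i y1 y2 _ le12]; first by rewrite sublinear0.
by apply: le_trans (hq.1 _ _) _; rewrite lerD ?hq.2.
Qed.

Lemma inf_sublinear (F : V -> set R) (lb : V -> R) :
  (forall x, F x !=set0) -> (forall x, lbound (F x) (lb x)) ->
  (forall x y a b, F x a -> F y b -> exists2 c, F (x + y) c & c <= a + b) ->
  (forall (t : R) x a, 0 < t -> F x a -> exists2 c, F (t *: x) c & c <= t * a) ->
  (exists2 c, F 0 c & c <= 0) ->
  sublinear (fun x => inf (F x)).
Proof.
move=> F0 Flb FD FZ [c0 Fc0 c0le].
have infF x a : F x a -> inf (F x) <= a by apply: inf_le_mem.
split=> [x y|t x].
  apply: lb_le_inf_add => // a b Fa Fb.
  by have [c Fc cle] := FD _ _ _ _ Fa Fb; apply: le_trans (infF _ _ Fc) cle.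
rewrite le_eqVlt => /predU1P[<-|t0].
  by rewrite scale0r mul0r; apply: le_trans (infF _ _ Fc0) c0le.
apply: lb_le_inf_scale => // a Fa.
by have [c Fc cle] := FZ _ _ _ t0 Fa; apply: le_trans (infF _ _ Fc) cle.
Qed.

(* Hahn-Banach is proved through a minimal sublinear minorant of p (Zorn); comparing it
   with its shift along y shows q (- y) = - q y, whence linearity. *)
Definition sublinear_shift q y x :=
  inf [set q (x + t *: y) - t * q y | t in [set t : R | 0 <= t]].

Section Shift.
Variables (q : V -> R) (y : V).
Hypothesis hq : sublinear q.

Let shift_set x := [set q (x + t *: y) - t * q y | t in [set t : R | 0 <= t]].

Let shift_set_lb x : lbound (shift_set x) (- q (- x)).
Proof.
move=> _ [t t0 <-]; rewrite lerBrDr -sublinearZ //.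
by have := hq.1 (x + t *: y) (- x); rewrite addrAC subrr add0r; lra.
Qed.

Let shift_set_at0 x : shift_set x (q x).
Proof. by exists 0; rewrite /= ?lexx ?scale0r ?addr0 ?mul0r ?subr0. Qed.

Lemma sublinear_shift_le x : sublinear_shift q y x <= q x.
Proof. exact: inf_le_mem (@shift_set_lb x) (@shift_set_at0 x). Qed.

Lemma sublinear_shift_opp : sublinear_shift q y (- y) <= - q y.
Proof.
apply: inf_le_mem (@shift_set_lb (- y)) _.
by exists 1; rewrite /= ?ler01 // scale1r addNr sublinear0 // mul1r sub0r.
Qed.

Lemma sublinear_shift_sublinear : sublinear (sublinear_shift q y).
Proof.
change (sublinear (fun x => inf (shift_set x))); apply: inf_sublinear _ (@shift_set_lb) _ _ _.
- by move=> x; exists (q x).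
- move=> x1 x2 _ _ [t1 t10 <-] [t2 t20 <-].
  exists (q (x1 + x2 + (t1 + t2) *: y) - (t1 + t2) * q y).
    by exists (t1 + t2) => //; rewrite /= addr_ge0.
  have := hq.1 (x1 + t1 *: y) (x2 + t2 *: y).
  by rewrite scalerDl addrACA mulrDl; lra.
- move=> t x _ t0 [s s0 <-]; exists (q (t *: x + (t * s) *: y) - (t * s) * q y).
    by exists (t * s) => //; rewrite /= mulr_ge0 // ltW.
  by rewrite -scalerA -scalerDr sublinearZ ?(ltW t0) // mulrBr mulrA.
- by exists (q 0) => //; rewrite sublinear0.
Qed.

End Shift.
End Sublinear.

Section HahnBanach.
Variables (R : realType) (V : lmodType R).
Implicit Types (p q r : V -> R).

Lemma minimal_sublinear_linear q : sublinear q ->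
  (forall r, sublinear r -> (forall x, r x <= q x) -> forall x, q x <= r x) ->
  linear_form q.
Proof.
move=> hq qmin.
have qN y : q (- y) = - q y.
  apply/le_anti/andP; split; last by rewrite lerNl sublinear_oppr_le.
  apply: le_trans (sublinear_shift_opp y hq).
  exact: qmin (sublinear_shift_sublinear y hq) (sublinear_shift_le y hq) (- y).
have qD x y : q (x + y) = q x + q y.
  apply/le_anti/andP; split; first exact: hq.1.
  by have := hq.1 (- x) (- y); rewrite -opprD !qN -opprD lerN2.
split=> // a x; have [a0|a0] := lerP 0 a; first exact: sublinearZ.
have -> : a *: x = (- a) *: (- x) by rewrite scaleNr scalerN opprK.
by rewrite sublinearZ ?oppr_ge0 ?ltW // qN mulrN mulNr opprK.
Qed.

Lemma exists_minimal_sublinear p : sublinear p -> exists q,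
  [/\ sublinear q, (forall x, q x <= p x) &
      forall r, sublinear r -> (forall x, r x <= q x) -> forall x, q x <= r x].
Proof.
move=> hp; pose T := {q : V -> R | sublinear q /\ forall x, q x <= p x}.
pose below (a b : T) := `[< forall x, sval b x <= sval a x >].
pose top : T := exist _ p (conj hp (fun x => lexx _)).
have svalP (a : T) : sublinear (sval a) /\ forall x, sval a x <= p x by case: a.
have [m mmax] : exists m, premaximal below m.
  apply: (ZL_preorder top) => [a|a b c /asboolP ab /asboolP bc|A Atot].
  - by apply/asboolP => x.
  - by apply/asboolP => x; exact: le_trans (bc x) (ab x).
  have [[a0 Aa0]|A0] := pselect (A !=set0); last first.
    by exists top => s As; exfalso; apply: A0; exists s.
  pose F x := [set sval a x | a in A].
  have Flb x : lbound (F x) (- p (- x)).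
    move=> _ [a _ <-]; apply: le_trans (sublinear_oppr_le x (svalP a).1).
    by rewrite lerN2 (svalP a).2.
  have infF a x : A a -> inf (F x) <= sval a x.
    by move=> Aa; apply: inf_le_mem (Flb x) _; exists a.
  have hF : sublinear (fun x => inf (F x)).
    apply: inf_sublinear _ Flb _ _ _.
    - by move=> x; exists (sval a0 x), a0.
    - move=> x y _ _ [a Aa <-] [b Ab <-].
      have [/asboolP ba|/asboolP ab] := Atot a b Aa Ab.
        exists (sval b (x + y)); first by exists b.
        by apply: le_trans ((svalP b).1.1 x y) _; rewrite lerD2r ba.
      exists (sval a (x + y)); first by exists a.
      by apply: le_trans ((svalP a).1.1 x y) _; rewrite lerD2l ab.
    - move=> t x _ t0 [a Aa <-]; exists (sval a (t *: x)); first by exists a.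
      exact: (svalP a).1.2 _ _ (ltW t0).
    - by exists (sval a0 0); [exists a0 | rewrite (sublinear0 (svalP a0).1)].
  have Fp x : inf (F x) <= p x by apply: le_trans (infF _ _ Aa0) ((svalP a0).2 x).
  exists (exist _ (fun x => inf (F x)) (conj hF Fp)) => a Aa.
  by apply/asboolP => x; exact: infF.
exists (sval m); split; [exact: (svalP m).1 | exact: (svalP m).2 |].
move=> r hr rm; have rp x : r x <= p x by apply: le_trans (rm x) ((svalP m).2 x).
by move/asboolP: (mmax (exist _ r (conj hr rp)) (asboolT rm)).
Qed.

Lemma hahn_banach_norming p v : sublinear p ->
  exists g, [/\ linear_form g, forall x, g x <= p x & g v = p v].
Proof.
move=> hp; have hs := sublinear_shift_sublinear v hp.
have [g [hg gs gmin]] := exists_minimal_sublinear hs.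
have lg := minimal_sublinear_linear hg gmin.
have gp x : g x <= p x by apply: le_trans (gs x) (sublinear_shift_le v hp x).
exists g; split=> //; apply/le_anti/andP; split=> //.
by rewrite -lerN2 -linear_formN //; apply: le_trans (gs _) (sublinear_shift_opp v hp).
Qed.

End HahnBanach.

Lemma sum_avg_weights {R : numFieldType} n : (0 < n)%N -> \sum_(i < n) n%:R^-1 = 1 :> R.
Proof. by move=> n0; rewrite sumr_const card_ord -[LHS]mulr_natr mulVf // pnatr_eq0 -lt0n. Qed.

Section NormedSpace.
Variables (R : realType) (X : normedModType R).
Implicit Types (f phi : X -> R) (x y : X).

Lemma unit_dual_linear f : unit_dual f -> linear_form f.
Proof. by case. Qed.

Lemma unit_dual_le1 f y : unit_dual f -> `|y| <= 1 -> f y <= 1.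
Proof. by case=> _ _ fn _ y1; apply: le_trans (ler_norm _) (le_trans (fn y) y1). Qed.

Lemma norm_sublinear : sublinear (fun x : X => `|x|).
Proof. by split=> [x y|t x t0]; rewrite ?ler_normD // normrZ ger0_norm. Qed.

Lemma exists_unit_dual : (exists x : X, x != 0) -> exists f, unit_dual f.
Proof.
case=> v v0; have [g [lg gle gv]] := hahn_banach_norming v norm_sublinear.
have {}gle x : g x <= `|x| := gle x.
have nv : 0 < `|v| by rewrite normr_gt0.
exists g; split; [exact: lg.1 | exact: lg.2 | |].
  by move=> x; rewrite ler_norml gle andbT lerNl -linear_formN // -normrN gle.
move=> e e0; exists (`|v|^-1 *: v).
  by rewrite normrZ ger0_norm ?mulVf ?gt_eqF // invr_ge0 ltW.
by rewrite lg.2 gv /= mulVf ?gt_eqF // ltrBlDr ltrDl.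
Qed.

Lemma norm_convex_comb_le1 n (lam : 'I_n -> R) (d : 'I_n -> X) :
  (forall i, 0 <= lam i) -> \sum_(i < n) lam i = 1 -> (forall i, `|d i| <= 1) ->
  `|\sum_(i < n) lam i *: d i| <= 1.
Proof.
move=> lam0 lam1 d1; apply: le_trans (ler_norm_sum _ _ _) _.
rewrite -[leRHS]lam1; apply: ler_sum => i _.
by rewrite normrZ ger0_norm // ler_piMr.
Qed.

Definition dual_norm phi := sup [set phi y | y in @ballX _ X].

Section DualNorm.
Variable phi : X -> R.
Hypotheses (phi_lin : linear_form phi) (phi_le : forall y, phi y <= `|y|).

Let phi_ball_has_sup : has_sup [set phi y | y in @ballX _ X].
Proof.
split; first by exists (phi 0), 0; rewrite /ballX /= ?normr0 ?ler01.
by exists 1 => _ [y y1 <-]; apply: le_trans (phi_le y) y1.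
Qed.

Lemma le_dual_norm_ball y : `|y| <= 1 -> phi y <= dual_norm phi.
Proof. by move=> y1; apply: sup_upper_bound phi_ball_has_sup _ _; exists y. Qed.

Lemma dual_norm_ge0 : 0 <= dual_norm phi.
Proof. by rewrite -(linear_form0 phi_lin) le_dual_norm_ball ?normr0. Qed.

Lemma dual_norm_le1 : dual_norm phi <= 1.
Proof.
apply: ge_sup; first exact: phi_ball_has_sup.1.
by move=> _ [y y1 <-]; apply: le_trans (phi_le y) y1.
Qed.

Lemma le_dual_norm y : phi y <= dual_norm phi * `|y|.
Proof.
have [->|y0] := eqVneq y 0; first by rewrite linear_form0 // normr0 mulr0.
have ny : 0 < `|y| by rewrite normr_gt0.
rewrite -ler_pdivrMr // mulrC -phi_lin.2 le_dual_norm_ball //.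
by rewrite normrZ ger0_norm ?mulVf ?gt_eqF // invr_ge0 ltW.
Qed.

Lemma ge_dual_norm y : - (dual_norm phi * `|y|) <= phi y.
Proof. by rewrite lerNl -linear_formN // -normrN le_dual_norm. Qed.

Lemma exists_slice_norming : (exists f0, unit_dual f0) -> exists f, unit_dual f /\
  forall eta y, 0 < eta -> slice f eta y -> dual_norm phi - eta <= phi y.
Proof.
case=> f0 f0u; have [b0|bpos] := eqVneq (dual_norm phi) 0.
  exists f0; split=> // eta y eta0 _.
  by apply: le_trans (ge_dual_norm y); rewrite b0 mul0r oppr0 sub0r lerNl oppr0 ltW.
have b_gt0 : 0 < dual_norm phi by rewrite lt0r bpos dual_norm_ge0.
exists (fun y => (dual_norm phi)^-1 * phi y); split.
  split=> [x y|a x|x|e e0]; first by rewrite phi_lin.1 mulrDr.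
  - by rewrite phi_lin.2 mulrCA.
  - rewrite normrM gtr0_norm ?invr_gt0 // ler_pdivrMl // ler_norml.
    by rewrite le_dual_norm ge_dual_norm.
  - have [_ [y y1 <-] yb] := sup_adherent (mulr_gt0 b_gt0 e0) phi_ball_has_sup.
    by exists y => //; rewrite ltr_pdivlMl // mulrBr mulr1.
move=> eta y eta0 [_]; rewrite ltr_pdivlMl // mulrBr mulr1 => /ltW.
by apply: le_trans; rewrite lerD2l lerN2 ler_piMl ?(ltW eta0) ?dual_norm_le1.
Qed.

End DualNorm.

Lemma SD2P_avg_slices : SD2P X -> forall n (f : 'I_n -> X -> R) (eta eps : R),
  (0 < n)%N -> (forall i, unit_dual (f i)) -> 0 < eta -> 0 < eps ->
  exists d : 'I_n -> X, (forall i, slice (f i) eta (d i)) /\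
    1 - eps < `|\sum_(i < n) n%:R^-1 *: d i|.
Proof.
move=> sd n f eta eps n0 fu eta0 eps0.
have w0 (i : 'I_n) : 0 < n%:R^-1 :> R by rewrite invr_gt0 ltr0n.
have w1 : \sum_(i < n) n%:R^-1 = 1 :> R := sum_avg_weights n0.
have [_ /(_ eps eps0)] := sd n _ f (fun=> eta) w0 w1 fu (fun=> eta0).
case=> _ [_ [[d [dS ->]] [d' [d'S ->]] diam]].
exists d; split=> //.
have := norm_convex_comb_le1 (fun i => ltW (w0 i)) w1 (fun i => (d'S i).1).
have := ler_normB (\sum_(i < n) n%:R^-1 *: d i) (\sum_(i < n) n%:R^-1 *: d' i).
move: diam; move: `|_ - _| `|\sum_(i < n) _ *: d i| `|\sum_(i < n) _ *: d' i|.
by clear; move=> *; lra.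
Qed.

End NormedSpace.

Lemma exists_gt0_of_sum_gt0 (R : realDomainType) (I : finType) (F : I -> R) :
  0 < \sum_i F i -> exists i, 0 < F i.
Proof.
move=> F0; apply: contrapT => /forallNP F_le0; move: F0; apply/negP.
by rewrite -leNgt sumr_le0 // => i _; rewrite leNgt; apply/negP; exact: F_le0.
Qed.

Lemma exists_lt_of_convex_comb (R : realDomainType) (I : finType) (a s : I -> R) (c : R) :
  (forall j, 0 <= a j) -> \sum_j a j = 1 -> \sum_j a j * s j < c -> exists j, s j < c.
Proof.
move=> a0 a1 lt_c; apply: contrapT => /forallNP ge_c; move: lt_c; apply/negP.
rewrite -leNgt -[c]mul1r -a1 mulr_suml; apply: ler_sum => j _.
by rewrite ler_wpM2l // leNgt; apply/negP; exact: ge_c.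
Qed.

Section ConicHull.
Variables (R : realType) (V : lmodType R).
Implicit Types (A C : set V) (N : V -> R).

Definition conic_hull A : set V := [set c | exists m (t : 'I_m -> R) (a : 'I_m -> V),
  [/\ forall j, 0 < t j, forall j, A (a j) & c = \sum_(j < m) t j *: a j]].

Lemma conic_hull0 A : conic_hull A 0.
Proof. by exists 0%N, (fun=> 0), (fun=> 0); split=> [[]|[]|]; rewrite ?big_ord0. Qed.

Lemma conic_hull_mem A a : A a -> conic_hull A a.
Proof. by exists 1%N, (fun=> 1), (fun=> a); rewrite big_ord1 scale1r. Qed.

Lemma conic_hullD A c1 c2 : conic_hull A c1 -> conic_hull A c2 -> conic_hull A (c1 + c2).
Proof.
move=> [m1 [t1 [a1 [t10 a1A ->]]]] [m2 [t2 [a2 [t20 a2A ->]]]].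
pose glue T (u1 : 'I_m1 -> T) (u2 : 'I_m2 -> T) j :=
  match fintype.split j with inl j1 => u1 j1 | inr j2 => u2 j2 end.
exists (m1 + m2)%N, (glue _ t1 t2), (glue _ a1 a2).
split=> [j|j|]; rewrite /glue; first (by case: fintype.split); first by case: fintype.split.
rewrite big_split_ord; congr (_ + _); apply: eq_bigr => j _.
  by rewrite (unsplitK (inl _)).
by rewrite (unsplitK (inr _)).
Qed.

Lemma conic_hullZ A (s : R) c : 0 < s -> conic_hull A c -> conic_hull A (s *: c).
Proof.
move=> s0 [m [t [a [t0 aA ->]]]]; exists m, (fun j => s * t j), a.
split=> // [j|]; first by rewrite mulr_gt0.
by rewrite scaler_sumr; apply: eq_bigr => j _; rewrite scalerA.
Qed.

Definition dist_to N C z := inf [set N (z - c) | c in C].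

Lemma dist_to_le N C z c : (forall v, 0 <= N v) -> C c -> dist_to N C z <= N (z - c).
Proof. by move=> N0 Cc; apply: inf_le_mem _ (ex_intro2 _ _ c Cc erefl) => _ [? _ <-]. Qed.

Lemma dist_conic_hull_sublinear N A : sublinear N -> (forall v, 0 <= N v) ->
  sublinear (dist_to N (conic_hull A)).
Proof.
move=> hN N0.
apply: (@inf_sublinear _ _ (fun z => [set N (z - c) | c in conic_hull A]) (fun=> 0)).
- by move=> z; exists (N (z - 0)), 0; first exact: conic_hull0.
- by move=> z _ [c _ <-].
- move=> z1 z2 _ _ [c1 C1 <-] [c2 C2 <-].
  exists (N (z1 + z2 - (c1 + c2))); first by exists (c1 + c2) => //; exact: conic_hullD.
  by rewrite opprD addrACA hN.1.
- move=> t z _ t0 [c Cc <-]; exists (N (t *: z - t *: c)).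
    by exists (t *: c) => //; exact: conic_hullZ.
  by rewrite -scalerBr hN.2 ?ltW.
- by exists (N (0 - 0)); [exists 0; first exact: conic_hull0 | rewrite subr0 sublinear0].
Qed.

End ConicHull.

Section Coordinates.
Variables (R : realType) (X : normedModType R) (n : nat).
Local Notation V := ('I_n -> X).
Implicit Types (z : V) (y : X).

Definition l1norm z := \sum_(i < n) `|z i|.

Lemma l1norm_ge0 z : 0 <= l1norm z.
Proof. exact: sumr_ge0. Qed.

Lemma l1norm_sublinear : sublinear l1norm.
Proof.
split=> [z1 z2|t z t0]; rewrite /l1norm.
  by rewrite -big_split ler_sum // => i _; exact: ler_normD.
by rewrite mulr_sumr ler_sum // => i _; rewrite normrZ ger0_norm.
Qed.

Lemma norm_le_l1norm z i : `|z i| <= l1norm z.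
Proof. by rewrite /l1norm (bigD1 i) //= lerDl sumr_ge0. Qed.

Definition coordvec (i : 'I_n) y : V := fun j => if j == i then y else 0.

Lemma l1norm_coordvec i y : l1norm (coordvec i y) = `|y|.
Proof.
rewrite /l1norm (bigD1 i) //= /coordvec eqxx big1 ?addr0 // => j /negPf ->.
exact: normr0.
Qed.

Lemma linear_form_coordvec (g : V -> R) i : linear_form g ->
  linear_form (fun y => g (coordvec i y)).
Proof.
case=> gD gZ; split=> [y1 y2|a y]; rewrite -?gD -?gZ; congr g; apply/funext => j;
  by rewrite /coordvec !fctE; case: (j == i); rewrite ?addr0 ?scaler0.
Qed.

Lemma linear_form_coord (g : V -> R) z : linear_form g ->
  g z = \sum_(i < n) g (coordvec i (z i)).
Proof.
move=> lg; rewrite -linear_form_sum //; congr g; apply/funext => j.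
rewrite fct_sumE (bigD1 j) //= /coordvec eqxx big1 ?addr0 // => i.
by rewrite eq_sym => /negPf ->.
Qed.

End Coordinates.
Arguments l1norm {R X n}.
Arguments l1norm_sublinear {R X n}.
Arguments l1norm_ge0 {R X n}.

Section Forward.
Variables (R : realType) (X : normedModType R) (n : nat) (eps : R).
Local Notation V := ('I_n -> X).

Definition large_avg_tuples : set V :=
  [set d | (forall i, `|d i| <= 1) /\ 1 - eps < `|\sum_(i < n) n%:R^-1 *: d i|].

Variable x : V.
Hypotheses (x1 : forall i, `|x i| <= 1) (eps0 : 0 < eps).
Hypothesis far : forall m (y : 'I_m -> V) (a : 'I_m -> R),
  (forall j, 0 < a j) -> \sum_(j < m) a j = 1 -> (forall j, large_avg_tuples (y j)) ->
  exists i, eps <= `|x i - \sum_(j < m) a j *: y j i|.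

Definition perturbed_tuples : set V :=
  [set d + b - x | d in large_avg_tuples & b in [set b | l1norm b <= eps / 2]].

Lemma far_scaled m (y : 'I_m -> V) (t : 'I_m -> R) : (0 < m)%N ->
  (forall j, 0 < t j) -> (forall j, large_avg_tuples (y j)) ->
  (\sum_(j < m) t j) * eps <= l1norm ((\sum_(j < m) t j) *: x - \sum_(j < m) t j *: y j).
Proof.
move=> m0 t0 yl; pose S := \sum_(j < m) t j.
have S0 : 0 < S.
  by rewrite /S (bigD1 (Ordinal m0)) //= ltr_wpDr ?t0 // sumr_ge0 // => j _; exact: ltW.
have a0 j : 0 < t j / S by rewrite divr_gt0.
have a1 : \sum_(j < m) t j / S = 1 by rewrite -mulr_suml mulfV ?gt_eqF.
have [i Hi] := far a0 a1 yl; apply: le_trans (norm_le_l1norm _ i).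
have -> : (S *: x - \sum_(j < m) t j *: y j) i = S *: (x i - \sum_(j < m) (t j / S) *: y j i).
  rewrite !fctE fct_sumE scalerBr scaler_sumr; congr (_ - _); apply: eq_bigr => j _.
  by rewrite scalerA mulrCA mulfV ?gt_eqF // mulr1.
by rewrite normrZ gtr0_norm // ler_pM2l.
Qed.

Lemma far_from_perturbed_cone d0 : large_avg_tuples d0 ->
  eps <= dist_to l1norm (conic_hull perturbed_tuples) (x - d0).
Proof.
move=> d0l; apply: lb_le_inf; first by exists (l1norm (x - d0 - 0)), 0; first exact: conic_hull0.
move=> _ [_ [m [t [a [t0 aP ->]]]] <-].
have /choice [db dbP] : forall j, exists db : V * V,
    [/\ large_avg_tuples db.1, l1norm db.2 <= eps / 2 & a j = db.1 + db.2 - x].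
  by move=> j; have [d dl [b bl <-]] := aP j; exists (d, b).
pose T := \sum_(j < m) t j; have T0 : 0 <= T by apply: sumr_ge0 => j _; exact: ltW.
pose t' (j : 'I_m.+1) := if unlift ord0 j is Some j' then t j' else 1.
pose y' (j : 'I_m.+1) := if unlift ord0 j is Some j' then (db j').1 else d0.
have t'0 j : 0 < t' j by rewrite /t'; case: unlift.
have y'l j : large_avg_tuples (y' j).
  by rewrite /y'; case: unlift => [j'|] //; case: (dbP j').
have := @far_scaled m.+1 y' t' isT t'0 y'l; rewrite !big_ord_recl /t' /y' !unlift_none scale1r.
under eq_bigr do rewrite liftK.
under [X in l1norm (_ - (_ + X))]eq_bigr do rewrite liftK.
rewrite -/T; set P := _ - _; set B := \sum_(j < m) t j *: (db j).2 => farP.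
have -> : x - d0 - \sum_(j < m) t j *: a j = P - B.
  have -> : \sum_(j < m) t j *: a j = \sum_(j < m) t j *: (db j).1 + B - T *: x.
    rewrite /T /B scaler_suml -big_split -sumrB; apply: eq_bigr => j _ /=.
    by case: (dbP j) => _ _ ->; rewrite scalerBr scalerDr.
  by rewrite /P scalerDl scale1r opprB !opprD !addrA (addrAC x (- d0)).
have normB : l1norm B <= T * (eps / 2).
  apply: le_trans (sublinear_sum _ _ _ l1norm_sublinear (fun j => ltW (t0 j))) _.
  by rewrite /T mulr_suml ler_sum // => j _; rewrite ler_pM2l //; case: (dbP j).
have := l1norm_sublinear.1 (P - B) B; rewrite subrK.
have : 0 <= T * eps by rewrite mulr_ge0 // ltW.
by move: farP normB; move: (l1norm P) (l1norm B) (l1norm (P - B)) => *; lra.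
Qed.

Lemma separating_forms d0 : large_avg_tuples d0 -> exists g : 'I_n -> X -> R,
  [/\ forall i, linear_form (g i), forall i y, g i y <= `|y|,
      forall d i y, large_avg_tuples d -> `|y| <= eps / 2 ->
        \sum_(j < n) g j (d j) + g i y <= \sum_(j < n) g j (x j)
    & exists i y, `|y| <= 1 /\ 0 < g i y].
Proof.
move=> d0l.
pose C := conic_hull perturbed_tuples.
have distC_le z c : C c -> dist_to l1norm C z <= l1norm (z - c) by apply: dist_to_le l1norm_ge0.
have hC : sublinear (dist_to l1norm C).
  exact: dist_conic_hull_sublinear l1norm_sublinear l1norm_ge0.
have [G [lG Gp Gv]] := hahn_banach_norming (x - d0) hC.
exists (fun i y => G (coordvec i y)); split.
- by move=> i; exact: linear_form_coordvec.
- move=> i y; rewrite -(l1norm_coordvec i y) -{2}[coordvec i y]subr0.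
  exact: le_trans (Gp _) (distC_le _ _ (conic_hull0 _)).
- move=> d i y dl y1; have Cd : C (d + coordvec i y - x).
    by apply: conic_hull_mem; exists d => //; exists (coordvec i y); rewrite //= l1norm_coordvec.
  have := le_trans (Gp _) (distC_le (d + coordvec i y - x) _ Cd).
  rewrite subrr (sublinear0 l1norm_sublinear).
  by rewrite lG.1 linear_formN // lG.1 subr_le0 -!(linear_form_coord _ lG).
have : 0 < G (x - d0) by rewrite Gv; apply: lt_le_trans eps0 (far_from_perturbed_cone d0l).
rewrite (linear_form_coord _ lG) => /exists_gt0_of_sum_gt0 [i Gi].
exists i, (2^-1 *: (x i - d0 i)); split; last by rewrite (linear_form_coordvec i lG).2 mulr_gt0.
rewrite normrZ ger0_norm // ler_pdivrMl // mulr1.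
by apply: le_trans (ler_normB _ _) _; have := lerD (x1 i) (d0l.1 i); lra.
Qed.

Lemma SD2P_no_separating_forms (g : 'I_n -> X -> R) : SD2P X ->
  (exists f0 : X -> R, unit_dual f0) ->
  (forall i, linear_form (g i)) -> (forall i y, g i y <= `|y|) ->
  (forall d i y, large_avg_tuples d -> `|y| <= eps / 2 ->
     \sum_(j < n) g j (d j) + g i y <= \sum_(j < n) g j (x j)) ->
  ~ exists i y, `|y| <= 1 /\ 0 < g i y.
Proof.
move=> sd f0 lg gle sep [k [w [w1 gw]]].
have n0 : (0 < n)%N by apply: leq_ltn_trans (ltn_ord k).
have /choice [f fP] i : exists f, unit_dual f /\
    forall eta y, 0 < eta -> slice f eta y -> dual_norm (g i) - eta <= g i y.
  exact: exists_slice_norming (lg i) (gle i) f0.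
have e2 : 0 < eps / 2 by rewrite divr_gt0.
pose gam := eps / 2 * g k w; have gam0 : 0 < gam by rewrite mulr_gt0.
pose eta := gam / (2 * n%:R).
have eta0 : 0 < eta by rewrite divr_gt0 // mulr_gt0 // ltr0n.
have [d [dS davg]] := SD2P_avg_slices sd n0 (fun i => (fP i).1) eta0 eps0.
have w2 : `|eps / 2 *: w| <= eps / 2 by rewrite normrZ gtr0_norm // ler_piMr // ltW.
have dl : large_avg_tuples d by split=> // i; case: (dS i).
have := sep d k _ dl w2; rewrite (lg k).2 -/gam.
have lowd : \sum_(j < n) (dual_norm (g j) - eta) <= \sum_(j < n) g j (d j).
  by apply: ler_sum => j _; exact: (fP j).2 _ _ eta0 (dS j).
have upx : \sum_(j < n) g j (x j) <= \sum_(j < n) dual_norm (g j).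
  apply: ler_sum => j _; apply: le_trans (le_dual_norm (lg j) (gle j) _) _.
  by rewrite ler_piMr ?dual_norm_ge0.
have neta : eta *+ n = gam / 2.
  by rewrite -mulr_natr /eta invfM mulrA -mulrA mulVf ?mulr1 // pnatr_eq0 -lt0n.
rewrite sumrB sumr_const card_ord neta in lowd.
move: lowd upx; move: (\sum_(j < n) _) (\sum_(j < n) g j (d j)) (\sum_(j < n) g j (x j)).
by move=> *; lra.
Qed.

End Forward.

Definition avg_norm_one_approx (R : realType) (X : normedModType R) : Prop :=
  forall (n : nat), (0 < n)%N -> forall (x : 'I_n -> X),
     (forall i, `|x i| <= 1) -> forall eps : R, 0 < eps ->
     exists (m : nat) (y : 'I_n -> 'I_m -> X) (a : 'I_m -> R),
       [/\ (forall i j, `|y i j| <= 1),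
           (forall j, 0 < a j),
           \sum_(j < m) a j = 1,
           (forall i, `|x i - \sum_(j < m) a j *: y i j| < eps) &
           (forall j, `|\sum_(i < n) n%:R^-1 *: y i j| > 1 - eps)].

Lemma SD2P_avg_norm_one_approx (R : realType) (X : normedModType R) :
  (exists v : X, v != 0) -> SD2P X -> avg_norm_one_approx X.
Proof.
move=> nt sd n n0 x x1 eps eps0; apply: contrapT => none.
have far m (y : 'I_m -> 'I_n -> X) (a : 'I_m -> R) : (forall j, 0 < a j) ->
    \sum_(j < m) a j = 1 -> (forall j, large_avg_tuples eps (y j)) ->
    exists i, eps <= `|x i - \sum_(j < m) a j *: y j i|.
  move=> a0 a1 yl; apply: contrapT => /forallNP near; apply: none.
  exists m, (fun i j => y j i), a; split=> // [i j|i|j]; first exact: (yl j).1.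
    by rewrite ltNge; apply/negP; exact: near.
  exact: (yl j).2.
have [f0 f0u] := exists_unit_dual nt.
have [d0 [d0S d0avg]] := SD2P_avg_slices sd n0 (fun=> f0u) ltr01 eps0.
have d0l : large_avg_tuples eps d0 by split=> // i; case: (d0S i).
have [g [lg gle sep gpos]] := separating_forms x1 eps0 far d0l.
by apply: (SD2P_no_separating_forms x1 eps0 sd _ lg gle sep gpos); exists f0.
Qed.

Lemma rational_weights (R : realType) n (lam : 'I_n -> R) (delta : R) :
  (forall i, 0 <= lam i) -> \sum_(i < n) lam i = 1 -> 0 < delta ->
  exists (K : nat) (k : 'I_n -> nat), [/\ (0 < K)%N, (0 < \sum_(i < n) k i)%N,
    forall i, (k i)%:R <= lam i * K%:R & 1 - delta <= (\sum_(i < n) k i)%:R / K%:R].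
Proof.
move=> lam0 lam1 d0; pose K := (Num.truncn (n%:R / delta) + n).+1.
have Kd : n%:R < delta * K%:R.
  rewrite -ltr_pdivrMl // mulrC; apply: lt_le_trans (truncnS_gt _) _.
  by rewrite ler_nat ltnS leq_addr.
have Kn : n%:R + 1 <= K%:R :> R by rewrite natr1 ler_nat ltnS leq_addl.
exists K, (fun i => Num.truncn (lam i * K%:R)).
have kge : K%:R - n%:R <= (\sum_(i < n) Num.truncn (lam i * K%:R))%:R :> R.
  have -> : K%:R - n%:R = \sum_(i < n) (lam i * K%:R - 1).
    by rewrite sumrB -mulr_suml lam1 mul1r sumr_const card_ord.
  by rewrite natr_sum ler_sum // => i _; rewrite lerBlDr natr1 ltW // truncnS_gt.
split=> // [|i|]; first by rewrite -(ltr0n R); lra.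
  by rewrite truncn_le mulr_ge0.
by rewrite ler_pdivlMr ?ltr0n // mulrBl mul1r; lra.
Qed.

Lemma card_tagged_bool n (k : 'I_n -> nat) :
  #|{: {i : 'I_n & 'I_(k i)} * bool}| = (2 * \sum_(i < n) k i)%N.
Proof.
rewrite card_prod card_bool card_tagged sumnE big_map big_enum /= mulnC.
by congr (2 * _); apply: eq_big => // i; rewrite card_ord.
Qed.

Section Backward.
Variables (R : realType) (X : normedModType R).
Implicit Types (f : X -> R) (alpha : R).

Lemma convex_comb_slices_le1 n (lam : 'I_n -> R) (f : 'I_n -> X -> R) (alpha : 'I_n -> R) u :
  (forall i, 0 <= lam i) -> \sum_(i < n) lam i = 1 ->
  convex_comb_sets lam (fun i => slice (f i) (alpha i)) u -> `|u| <= 1.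
Proof. by move=> lam0 lam1 [d [dS ->]]; apply: norm_convex_comb_le1 => // i; case: (dS i). Qed.

Lemma slice_mean f alpha k (F : 'I_k -> X) : unit_dual f -> (0 < k)%N ->
  (forall r, slice f alpha (F r)) -> slice f alpha (k%:R^-1 *: \sum_(r < k) F r).
Proof.
move=> fu k0 FS; have lf := unit_dual_linear fu; split.
  rewrite scaler_sumr; apply: norm_convex_comb_le1 _ (sum_avg_weights k0) _ => r.
    by rewrite invr_ge0.
  exact: (FS r).1.
rewrite lf.2 linear_form_sum // ltr_pdivlMl ?ltr0n //.
have -> : k%:R * (1 - alpha) = \sum_(r < k) (1 - alpha) by rewrite sumr_const card_ord mulr_natl.
apply: ltr_sum => [|r _]; last exact: (FS r).2.
by apply/hasP; exists (Ordinal k0); rewrite ?mem_index_enum.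
Qed.

Lemma convex_comb_defect f z m (a : 'I_m -> R) (w : 'I_m -> X) : unit_dual f ->
  (forall j, 0 <= a j) -> \sum_(j < m) a j = 1 ->
  \sum_(j < m) a j * (1 - f (w j)) <= (1 - f z) + `|z - \sum_(j < m) a j *: w j|.
Proof.
move=> fu a0 a1; have lf := unit_dual_linear fu; have [_ _ fle _] := fu.
have -> : \sum_(j < m) a j * (1 - f (w j)) = 1 - f (\sum_(j < m) a j *: w j).
  rewrite linear_form_sum // -[X in X - _]a1 -sumrB; apply: eq_bigr => j _.
  by rewrite lf.2 mulrBr mulr1.
have := le_trans (ler_norm _) (fle (z - \sum_(j < m) a j *: w j)).
by rewrite lf.1 linear_formN //; lra.
Qed.

Lemma ler_norm_convex_comb_diff n (lam c : 'I_n -> R) (u v : 'I_n -> X) :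
  (forall i, 0 <= c i <= lam i) -> \sum_(i < n) lam i = 1 ->
  (forall i, `|u i| <= 1) -> (forall i, `|v i| <= 1) ->
  `|\sum_(i < n) c i *: (u i - v i)| - 2 * (1 - \sum_(i < n) c i)
    <= `|\sum_(i < n) lam i *: (u i - v i)|.
Proof.
move=> c_lam lam1 u1 v1; rewrite lerBlDr.
set D := \sum_(i < n) lam i *: (u i - v i).
have -> : \sum_(i < n) c i *: (u i - v i) = D - \sum_(i < n) (lam i - c i) *: (u i - v i).
  by rewrite -sumrB; apply: eq_bigr => i _; rewrite scalerBl opprB addrCA subrr addr0.
apply: le_trans (ler_normB _ _) _; rewrite lerD2l.
have -> : 2 * (1 - \sum_(i < n) c i) = \sum_(i < n) (lam i - c i) * 2.
  by rewrite -mulr_suml sumrB lam1 mulrC.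
apply: le_trans (ler_norm_sum _ _ _) (ler_sum _ _) => i _.
have /andP[c0 cl] := c_lam i; rewrite normrZ ger0_norm ?subr_ge0 // ler_wpM2l ?subr_ge0 //.
by apply: le_trans (ler_normB _ _) _; have := lerD (u1 i) (v1 i); lra.
Qed.

Definition tagged_mean n (k : 'I_n -> nat) (w : {i : 'I_n & 'I_(k i)} -> X)
    (c : 'I_n -> X) i :=
  if (0 < k i)%N then (k i)%:R^-1 *: \sum_(r < k i) w (Tagged (fun i => 'I_(k i)) r) else c i.

Lemma sum_tagged_mean n (k : 'I_n -> nat) (w : {i : 'I_n & 'I_(k i)} -> X) (c : 'I_n -> X) :
  \sum_p w p = \sum_(i < n) (k i)%:R *: tagged_mean w c i.
Proof.
have -> : \sum_p w p = \sum_(i < n) \sum_(r < k i) w (Tagged (fun i => 'I_(k i)) r).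
  rewrite (@sig_big_dep _ _ _ _ (fun i => 'I_(k i)) predT (fun _ _ => true)
    (fun i r => w (Tagged (fun i => 'I_(k i)) r))) /=.
  by apply: eq_bigr => -[].
apply: eq_bigr => i _; rewrite /tagged_mean; case: posnP => ki.
  by rewrite [in RHS]ki scale0r big1 // => -[r rk]; exfalso; rewrite ki in rk.
by rewrite scalerA mulfV ?scale1r // pnatr_eq0 -lt0n.
Qed.

Lemma sum_signed_tagged_mean n (k : 'I_n -> nat)
    (w : {i : 'I_n & 'I_(k i)} * bool -> X) (c : 'I_n -> X) :
  \sum_(q : {i : 'I_n & 'I_(k i)} * bool) (-1) ^+ q.2 *: w q = \sum_(i < n) (k i)%:R *:
    (tagged_mean (fun p => w (p, false)) c i - tagged_mean (fun p => w (p, true)) c i).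
Proof.
have -> : \sum_(q : {i : 'I_n & 'I_(k i)} * bool) (-1) ^+ q.2 *: w q =
    \sum_p \sum_(b : bool) (-1) ^+ b *: w (p, b) by rewrite pair_bigA; apply: eq_bigr => -[].
under eq_bigr do rewrite big_bool /= expr0 expr1 scale1r scaleN1r addrC.
by rewrite sumrB !(sum_tagged_mean _ c) -sumrB; apply: eq_bigr => i _; rewrite scalerBr.
Qed.

End Backward.

Section FromApprox.
Variables (R : realType) (X : normedModType R).
Hypothesis approx : avg_norm_one_approx X.

Lemma avg_norm_one_approx_finType (Q : finType) (x : Q -> X) (eps : R) :
  (0 < #|Q|)%N -> (forall q, `|x q| <= 1) -> 0 < eps ->
  exists m (y : Q -> 'I_m -> X) (a : 'I_m -> R),
    [/\ forall q j, `|y q j| <= 1, forall j, 0 < a j, \sum_(j < m) a j = 1,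
        forall q, `|x q - \sum_(j < m) a j *: y q j| < eps &
        forall j, 1 - eps < `|\sum_q #|Q|%:R^-1 *: y q j|].
Proof.
move=> Q0 x1 eps0.
have [m [y [a [y1 a0 a1 yx yavg]]]] := approx Q0 (fun c => x1 (enum_val c)) eps0.
exists m, (fun q => y (enum_rank q)), a; split=> // [q|j].
  by have := yx (enum_rank q); rewrite enum_rankK.
by have := yavg j; rewrite (reindex enum_rank) //; exact/onW_bij/enum_rank_bij.
Qed.

Lemma avg_norm_one_approx_in_slices (Q : finType) (f : Q -> X -> R) (z : Q -> X)
    (s : Q -> bool) (eps : R) :
  (0 < #|Q|)%N -> 0 < eps -> (forall q, unit_dual (f q)) -> (forall q, `|z q| <= 1) ->
  (forall q, 1 - eps < f q (z q)) ->
  exists w : Q -> X, (forall q, slice (f q) (2 * eps * #|Q|%:R) (w q)) /\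
    1 - eps < `|\sum_q #|Q|%:R^-1 *: ((-1) ^+ s q *: w q)|.
Proof.
move=> Q0 eps0 fu z1 fz.
have x1 q : `|(-1) ^+ s q *: z q| <= 1 by rewrite normrZ normr_sign mul1r.
have [m [y [a [y1 a0 a1 yx yavg]]]] := avg_norm_one_approx_finType Q0 x1 eps0.
pose w q j := (-1) ^+ s q *: y q j.
have w1 q j : `|w q j| <= 1 by rewrite normrZ normr_sign mul1r.
pose h q j := 1 - f q (w q j).
have h0 q j : 0 <= h q j by rewrite subr_ge0 unit_dual_le1.
have defect q : \sum_(j < m) a j * h q j < 2 * eps.
  apply: le_lt_trans (convex_comb_defect (z q) (w q) (fu q) (fun j => ltW (a0 j)) a1) _.
  have -> : z q - \sum_(j < m) a j *: w q j =
      (-1) ^+ s q *: ((-1) ^+ s q *: z q - \sum_(j < m) a j *: y q j).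
    rewrite scalerBr signrZK scaler_sumr; congr (_ - _); apply: eq_bigr => j _.
    by rewrite !scalerA mulrC.
  by rewrite normrZ normr_sign mul1r; have := fz q; have := yx q; lra.
have [j hj] : exists j, \sum_q h q j < 2 * eps * #|Q|%:R.
  apply: exists_lt_of_convex_comb (fun j => ltW (a0 j)) a1 _.
  under eq_bigr do rewrite mulr_sumr; rewrite exchange_big /=.
  rewrite mulr_natr -sumr_const; apply: ltr_sum => [|q _]; last exact: defect.
  by move/card_gt0P: Q0 => -[q _]; apply/hasP; exists q; rewrite ?mem_index_enum.
exists (fun q => w q j); split=> [q|].
  split=> //; rewrite ltrBlDl -ltrBlDr; apply: le_lt_trans hj.
  by rewrite (bigD1 q) //= lerDl sumr_ge0.
by under eq_bigr do rewrite signrZK.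
Qed.

Lemma approx_slice_means n (f : 'I_n -> X -> R) (alpha : 'I_n -> R) (k : 'I_n -> nat)
    (eps : R) :
  (forall i, unit_dual (f i)) -> (0 < \sum_(i < n) k i)%N -> 0 < eps ->
  (forall i, 4 * eps * (\sum_(i < n) k i)%:R <= alpha i) ->
  exists u v : 'I_n -> X,
    [/\ forall i, slice (f i) (alpha i) (u i), forall i, slice (f i) (alpha i) (v i) &
        2 * (\sum_(i < n) k i)%:R * (1 - eps) < `|\sum_(i < n) (k i)%:R *: (u i - v i)|].
Proof.
move=> fu N0 eps0 alpha_eps; pose Q := ({i : 'I_n & 'I_(k i)} * bool)%type.
have cardQ : #|{: Q}|%:R = 2 * (\sum_(i < n) k i)%:R :> R.
  by rewrite card_tagged_bool natrM.
have Q0 : (0 < #|{: Q}|)%N by rewrite card_tagged_bool muln_gt0.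
have N1 : 1 <= (\sum_(i < n) k i)%:R :> R by rewrite ler1n.
have /choice [z zP] i : exists y, `|y| <= 1 /\ 1 - eps < f i y.
  by have [_ _ _ /(_ _ eps0) [y]] := fu i; exists y.
have [w [wS wavg]] := avg_norm_one_approx_in_slices (fun q : Q => q.2) Q0 eps0
  (fun q => fu (tag q.1)) (fun q => (zP (tag q.1)).1) (fun q => (zP (tag q.1)).2).
have sliceW i beta y : beta <= alpha i -> slice (f i) beta y -> slice (f i) (alpha i) y.
  by move=> ba [y1 fy]; split=> //; apply: le_lt_trans fy; rewrite lerD2l lerN2.
have eps_alpha i : 2 * eps * #|{: Q}|%:R <= alpha i.
  by have := alpha_eps i; rewrite cardQ; lra.
have meanS b i : slice (f i) (alpha i) (tagged_mean (fun p => w (p, b)) z i).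
  rewrite /tagged_mean; case: ifP => ki.
    by apply: slice_mean => // r; exact: sliceW (eps_alpha i) (wS (Tagged _ r, b)).
  by apply: sliceW (zP i); have := alpha_eps i; have := ltW eps0; nra.
exists (tagged_mean (fun p => w (p, false)) z), (tagged_mean (fun p => w (p, true)) z).
split=> //; rewrite -(sum_signed_tagged_mean w z).
move: wavg; rewrite -scaler_sumr normrZ ger0_norm ?invr_ge0 ?ler0n // cardQ.
by rewrite ltr_pdivlMl // mulr_gt0 // ltr0n.
Qed.

End FromApprox.

Lemma avg_norm_one_approx_SD2P (R : realType) (X : normedModType R) :
  avg_norm_one_approx X -> SD2P X.
Proof.
move=> approx n lam f alpha lam0 lam1 fu alpha0; have lam0' i : 0 <= lam i := ltW (lam0 i).
split=> [u v /(convex_comb_slices_le1 lam0' lam1) u1 /(convex_comb_slices_le1 lam0' lam1) v1|e e0].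
  by apply: le_trans (ler_normB u v) _; lra.
have e8 : 0 < e / 8 by rewrite divr_gt0.
have [K [k [K0 N0 kle Nge]]] := rational_weights lam0' lam1 e8.
pose N := (\sum_(i < n) k i)%N; have KR : 0 < K%:R :> R by rewrite ltr0n.
pose a0 := \big[Order.min/1]_i alpha i.
have a00 : 0 < a0 by apply: lt_bigmin.
have a0le i : a0 <= alpha i by exact: bigmin_le.
(* e / 4 bounds the loss in the final estimate; a0 / (4 N) puts a whole column of the
   approximating family inside the slices. *)
pose eps1 := Order.min (e / 4) (a0 / (4 * N%:R)).
have eps10 : 0 < eps1 by rewrite lt_min !divr_gt0 // mulr_gt0 // ltr0n.
have eps1e : eps1 <= e / 4 by rewrite /eps1 ge_min lexx.
have eps1a i : 4 * eps1 * N%:R <= alpha i.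
  apply: le_trans (a0le i); have : eps1 <= a0 / (4 * N%:R) by rewrite /eps1 ge_min lexx orbT.
  by rewrite ler_pdivlMr ?mulr_gt0 ?ltr0n // mulrA (mulrC eps1).
have [u [v [uS vS uv]]] := approx_slice_means approx fu N0 eps10 eps1a.
exists (\sum_(i < n) lam i *: u i), (\sum_(i < n) lam i *: v i).
split; [by exists u | by exists v |].
rewrite -sumrB; under eq_bigr do rewrite -scalerBr.
have ck i : 0 <= (k i)%:R / (K%:R : R) <= lam i by rewrite divr_ge0 //= ler_pdivrMr.
have := ler_norm_convex_comb_diff ck lam1 (fun i => (uS i).1) (fun i => (vS i).1).
have -> : \sum_(i < n) ((k i)%:R / K%:R) *: (u i - v i) =
    K%:R^-1 *: \sum_(i < n) (k i)%:R *: (u i - v i).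
  by rewrite scaler_sumr; apply: eq_bigr => i _; rewrite scalerA mulrC.
rewrite normrZ ger0_norm ?invr_ge0 ?ler0n // -mulr_suml -natr_sum -/N.
move: uv Nge; move: `|\sum_(i < n) (k i)%:R *: _| `|\sum_(i < n) lam i *: _| => A B NA Nge AB.
have s1 : N%:R / K%:R <= 1 :> R.
  rewrite ler_pdivrMr // mul1r natr_sum; apply: le_trans (ler_sum _ (fun i _ => kle i)) _.
  by rewrite -mulr_suml lam1 mul1r.
have sA : 2 * (N%:R / K%:R) * (1 - eps1) < K%:R^-1 * A.
  have -> : 2 * (N%:R / K%:R) * (1 - eps1) = K%:R^-1 * (2 * N%:R * (1 - eps1)) by ring.
  by rewrite ltr_pM2l ?invr_gt0.
have := ler_piMl (ltW eps10) s1; lra.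
Qed.

Theorem lemma5p5 (R : realType) (X : completeNormedModType R)
  (nontriv : exists x : X, x != 0) :
  SD2P X <->
  (forall (n : nat), (0 < n)%N -> forall (x : 'I_n -> X),
     (forall i, `|x i| <= 1) -> forall eps : R, 0 < eps ->
     exists (m : nat) (y : 'I_n -> 'I_m -> X) (a : 'I_m -> R),
       [/\ (forall i j, `|y i j| <= 1),
           (forall j, 0 < a j),
           \sum_(j < m) a j = 1,
           (forall i, `|x i - \sum_(j < m) a j *: y i j| < eps) &
           (forall j, `|\sum_(i < n) n%:R^-1 *: y i j| > 1 - eps)]).
Proof.
split; first exact: SD2P_avg_norm_one_approx.
exact: avg_norm_one_approx_SD2P.
Qed.
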